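(* Let $p\in(0,1/2)$ be a fixed constant, and let $k=k(n)$ and $\delta=\delta(n)$ satisfy $k=o(n)$ and $\delta=o(1)$ as $n\to\infty$. Then there exists a variable-length algorithm that computes $\mathsf{TH}_k$ from noisy queries with worst-case error probability at most $\delta$, i.e. $\max_{\mathbf{x}\in\{0,1\}^n}\mathbb{P}(\widehat{\mathsf{TH}}_k\neq\mathsf{TH}_k(\mathbf{x})\mid\mathbf{x})\le\delta$, and whose number of queries $M$ satisfies \[ \mathbb{E}[M\mid\mathbf{x}]\le(1+o(1))\,\frac{n\log\frac{k}{\delta}}{D_{\mathsf{KL}}(p\|1-p)} \] for every input instance $\mathbf{x}\in\{0,1\}^n$.
   Context: For $\mathbf{x}=(x_1,\dots,x_n)\in\{0,1\}^n$ and a positive integer $k$, the threshold-$k$ function is $\mathsf{TH}_k(\mathbf{x})=1$ if $\sum_{i=1}^n x_i\ge k$ and $\mathsf{TH}_k(\mathbf{x})=0$ otherwise. Noisy query model: at each time step the algorithm chooses an index $i\in[n]$ (possibly depending on all previous responses) and observes $x_i\oplus Z$, where $Z\sim\mathsf{Bern}(p)$ is independent of everything else; $p$ is known to the algorithm. A variable-length algorithm may decide adaptively when to stop (so the number of queries $M$ is random), and then outputs an estimate $\widehat{\mathsf{TH}}_k\in\{0,1\}$. $D_{\mathsf{KL}}(p\|1-p)=(1-2p)\log\frac{1-p}{p}$; $\log$ is the natural logarithm. The $o(1)$ terms are with respect to $n\to\infty$. *)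

From HB Require Import structures.
From mathcomp Require Import all_boot all_order all_algebra.
From mathcomp Require Import all_classical all_reals all_analysis.
Set Implicit Arguments. Unset Strict Implicit. Unset Printing Implicit Defensive.
Import Order.TTheory GRing.Theory Num.Theory.
Local Open Scope ring_scope.

Definition TH (n k : nat) (x : 'I_n -> bool) : bool :=
  (k <= \sum_(i < n) (x i : nat))%N.

(* A deterministic variable-length adaptive algorithm on n bits:
   given the sequence of noisy responses observed so far, it either
   queries an index (inl i) or stops and outputs an estimate (inr b). *)
Definition strategy (n : nat) := seq bool -> ('I_n + bool)%type.

Section Defs.
Variable R : realType.

(* probability of observing response r when the algorithm takes action a
   (0 if the algorithm has stopped). The response is x_i xor Z, Z~Bern(p). *)
Definition step_prob (p : R) (n : nat) (x : 'I_n -> bool)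
  (a : ('I_n + bool)%type) (r : bool) : R :=
  match a with
  | inl i => if r == x i then 1 - p else p
  | inr _ => 0
  end.

(* probability that the response history begins with h (the algorithm having
   queried at every proper prefix of h). *)
Definition reach (p : R) (n : nat) (A : strategy n) (x : 'I_n -> bool)
  (h : seq bool) : R :=
  \prod_(t < size h) step_prob p x (A (take t h)) (nth false h t).

(* P(M > m | x) : the algorithm makes more than m queries. *)
Definition prob_more (p : R) (n : nat) (A : strategy n) (x : 'I_n -> bool)
  (m : nat) : R :=
  \sum_(h : m.-tuple bool)
     reach p A x h * (if A h is inl _ then 1 else 0).

(* P(M = m and output != TH_k(x) | x). *)
Definition prob_err_at (p : R) (n k : nat) (A : strategy n)
  (x : 'I_n -> bool) (m : nat) : R :=
  \sum_(h : m.-tuple bool)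
     reach p A x h * (if A h is inr b then (b != TH k x)%:R else 0).

(* P(output != TH_k(x) | x) <= d  (sum over all stopping times m;
   stated as a bound on every partial sum of the nonnegative series). *)
Definition error_le (p : R) (n k : nat) (A : strategy n)
  (x : 'I_n -> bool) (d : R) : Prop :=
  forall N : nat, \sum_(m < N) prob_err_at p k A x m <= d.

(* E[M | x] <= B, using E[M] = sum_{m>=0} P(M > m) (valid in [0, +oo],
   so this also forces almost-sure termination). *)
Definition expected_queries_le (p : R) (n : nat) (A : strategy n)
  (x : 'I_n -> bool) (B : R) : Prop :=
  forall N : nat, \sum_(m < N) prob_more p A x m <= B.

Definition DKL (p : R) : R := (1 - 2 * p) * ln ((1 - p) / p).

End Defs.

From HB Require Import structures.
From mathcomp Require Import all_boot all_order all_algebra.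
From mathcomp Require Import all_classical all_reals all_analysis.
From mathcomp Require Import zify ring lra.
Import Order.TTheory GRing.Theory Num.Theory.
Import numFieldNormedType.Exports.
Local Open Scope classical_set_scope.
Local Open Scope ring_scope.
Set Implicit Arguments. Unset Strict Implicit. Unset Printing Implicit Defensive.

(* The test reads the bits in order. On each bit it runs a random walk on
   [0, a + b] started at [b], moving up on a noisy response 1 and down on a 0;
   reaching [a + b] declares the bit a one, reaching [0] a zero. It answers 1 as
   soon as [k] ones are declared and 0 once the bits run out. With
   [rho = p / (1 - p)], gambler's ruin bounds the probability of declaring a zero
   a one by [rho ^+ a] and a one a zero by [rho ^+ b], so the error probability
   is at most [n rho^a] if [TH_k(x) = 0] and [k rho^b] if [TH_k(x) = 1]:
   [a ~ ln (n / delta) / L] and [b ~ ln (k / delta) / L] suffice, where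
   [L = ln ((1 - p) / p)]. Each walk drifts towards its correct end at speed
   [1 - 2p], so the expected number of queries is at most
   [(b n + a min(n, k)) / (1 - 2p)], which is [(1 + o(1)) n ln (k / delta) / D]
   since [k = o(n)] and [ln (k / delta) -> oo]. Both bounds follow by optional
   stopping from explicit potentials on the state of the test. *)

Lemma sum_tuple0 (T : finType) (V : nmodType) (f : 0.-tuple T -> V) :
  \sum_(t : 0.-tuple T) f t = f [tuple].
Proof. by rewrite (big_pred1 [tuple]) // => t; rewrite [t]tuple0 /= eq_refl. Qed.

Lemma sum_tupleS (T : finType) (V : nmodType) m (f : m.+1.-tuple T -> V) :
  \sum_(t : m.+1.-tuple T) f t = \sum_(r : T) \sum_(h : m.-tuple T) f [tuple of r :: h].
Proof.
rewrite pair_big (reindex (fun rh : T * m.-tuple T => [tuple of rh.1 :: rh.2])) //=.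
exists (fun t : m.+1.-tuple T => (thead t, [tuple of behead t])).
  by move=> [r h] _; congr pair; apply/val_inj.
by move=> t _; case/tupleP: t => r h; apply/val_inj.
Qed.

Section Histories.
Variables (R : realType) (p : R) (n : nat) (x : 'I_n -> bool).

Lemma step_prob_ge0 a r : 0 <= p <= 1 -> 0 <= step_prob p x a r.
Proof. by case/andP=> p0 p1; case: a => [i|b] //=; case: ifP; rewrite ?subr_ge0. Qed.

Lemma reach_cons (A : strategy n) r h :
  reach p A x (r :: h) = step_prob p x (A [::]) r * reach p (fun h' => A (r :: h')) x h.
Proof. by rewrite /reach /= big_ord_recl. Qed.

Definition hist_expect (A : strategy n) (g : seq bool -> R) m :=
  \sum_(h : m.-tuple bool) reach p A x h * g h.

Lemma hist_expect0 A g : hist_expect A g 0 = g [::].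
Proof. by rewrite /hist_expect sum_tuple0 /reach big_ord0 mul1r. Qed.

Lemma hist_expectS A g m :
  hist_expect A g m.+1 = \sum_(r : bool) step_prob p x (A [::]) r *
    hist_expect (fun h => A (r :: h)) (fun h => g (r :: h)) m.
Proof.
rewrite /hist_expect sum_tupleS; apply: eq_bigr => r _; rewrite mulr_sumr.
by apply: eq_bigr => h _; rewrite reach_cons mulrA.
Qed.

Lemma prob_more_hist_expect A c m :
  c * prob_more p A x m = hist_expect A (fun h => if A h is inr _ then 0 else c) m.
Proof.
rewrite /prob_more mulr_sumr; apply: eq_bigr => h _.
by rewrite mulrCA; case: (A h); rewrite ?mulr1 ?mulr0.
Qed.

(* Optional stopping for the supermartingale [V] plus the accumulated [g]. *)
Lemma sum_hist_expect_le_potential (A : strategy n) (V g : seq bool -> R) N :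
  0 <= p <= 1 -> (forall h, 0 <= V h) ->
  (forall h, \sum_(r : bool) step_prob p x (A h) r * V (rcons h r) + g h <= V h) ->
  \sum_(m < N) hist_expect A g m <= V [::].
Proof.
move=> p01; elim: N A V g => [|N IH] A V g V_ge0 V_drift; first by rewrite big_ord0.
rewrite big_ord_recl hist_expect0.
under eq_bigr do rewrite hist_expectS.
rewrite exchange_big /= addrC; apply: le_trans (V_drift [::]); rewrite lerD2r.
apply: ler_sum => r _; rewrite -mulr_sumr; apply: ler_wpM2l; first exact: step_prob_ge0.
exact: (IH (fun h => A (r :: h)) (fun h => V (r :: h))).
Qed.

End Histories.

Section Bits.
Local Open Scope nat_scope.
Variables (n : nat) (x : 'I_n -> bool).

Definition bit (j : nat) : bool := if (insub j : option 'I_n) is Some i then x i else false.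

Definition ones (j : nat) : nat := \sum_(i < j) bit i.

Definition zeros (j : nat) : nat := \sum_(i < j) ((i < n) && ~~ bit i).

Lemma bitE (i : 'I_n) : bit i = x i.
Proof. by rewrite /bit valK. Qed.

Lemma bit_out j : n <= j -> bit j = false.
Proof. by move=> nj; rewrite /bit insubF // ltnNge nj. Qed.

Lemma ones0 : ones 0 = 0.
Proof. exact: big_ord0. Qed.

Lemma zeros0 : zeros 0 = 0.
Proof. exact: big_ord0. Qed.

Lemma onesS j : ones j.+1 = ones j + bit j.
Proof. by rewrite /ones big_ord_recr. Qed.

Lemma zerosS j : zeros j.+1 = zeros j + ((j < n) && ~~ bit j).
Proof. by rewrite /zeros big_ord_recr. Qed.

Lemma ones_homo : {homo ones : j j' / j <= j'}.
Proof. by apply: (homo_leq leqnn leq_trans) => j; rewrite onesS leq_addr. Qed.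

Lemma zeros_homo : {homo zeros : j j' / j <= j'}.
Proof. by apply: (homo_leq leqnn leq_trans) => j; rewrite zerosS leq_addr. Qed.

Lemma ones_out j : n <= j -> ones j = ones n.
Proof.
move/subnK <-; elim: (j - n) => // d IH.
by rewrite addSn onesS bit_out ?leq_addl // addn0.
Qed.

Lemma zeros_out j : n <= j -> zeros j = zeros n.
Proof.
move/subnK <-; elim: (j - n) => // d IH.
by rewrite addSn zerosS ltnNge leq_addl addn0.
Qed.

Lemma ones_le j : ones j <= ones n.
Proof. by case: (leqP j n) => [/ones_homo // | /ltnW/ones_out ->]. Qed.

Lemma zeros_le j : zeros j <= zeros n.
Proof. by case: (leqP j n) => [/zeros_homo // | /ltnW/zeros_out ->]. Qed.

Lemma ones_add_zeros j : j <= n -> ones j + zeros j = j.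
Proof.
elim: j => [|j IH] jn; first by rewrite ones0 zeros0.
by rewrite onesS zerosS jn /=; move: (IH (ltnW jn)); case: (bit j) => /=; lia.
Qed.

Lemma TH_ones k : TH k x = (k <= ones n).
Proof. by rewrite /TH /ones; congr (_ <= _); apply: eq_bigr => i _; rewrite bitE. Qed.

End Bits.

(* [pos] is the bit under test, [walk] the position of its walk in (0, a + b),
   [found] the number of bits declared ones so far. *)
Record test_state := TestState { pos : nat; walk : nat; found : nat }.

Section ThresholdTest.
Variables (R : realType) (p : R) (n k a b : nat) (x : 'I_n -> bool).
Hypotheses (a_gt0 : (0 < a)%N) (b_gt0 : (0 < b)%N).

Definition test_step (s : test_state) (r : bool) : test_state :=
  let: TestState j u c := s in
  if r then (if (a + b <= u.+1)%N then TestState j.+1 b c.+1 else TestState j u.+1 c)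
  else (if (u <= 1)%N then TestState j.+1 b c else TestState j u.-1 c).

Definition test_state_of (h : seq bool) : test_state :=
  foldl test_step (TestState 0%N b 0%N) h.

Definition threshold_test : strategy n := fun h =>
  let: TestState j _ c := test_state_of h in
  if (c < k)%N then (if (insub j : option 'I_n) is Some i then inl i else inr false)
  else inr true.

Lemma test_state_of_rcons h r : test_state_of (rcons h r) = test_step (test_state_of h) r.
Proof. by rewrite /test_state_of foldl_rcons. Qed.

Lemma walk_bounds h : (0 < walk (test_state_of h) < a + b)%N.
Proof.
elim/last_ind: h => [|h r IH] /=; first lia.
rewrite test_state_of_rcons; move: IH; case: (test_state_of h) => j u c /= uab.
by case: r; case: ifP => /=; lia.
Qed.

Lemma threshold_test_potential_bound (V : test_state -> R) (g_query : R)
    (g_stop : bool -> R) N :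
  0 <= p <= 1 ->
  (forall j u c, (0 < u < a + b)%N -> 0 <= V (TestState j u c)) ->
  (forall j u c, (0 < u < a + b)%N -> (k <= c)%N -> g_stop true <= V (TestState j u c)) ->
  (forall j u c, (0 < u < a + b)%N -> (c < k)%N -> (n <= j)%N ->
     g_stop false <= V (TestState j u c)) ->
  (forall j u c, (0 < u < a + b)%N -> (c < k)%N -> (j < n)%N ->
     \sum_(r : bool) (if r == bit x j then 1 - p else p) * V (test_step (TestState j u c) r)
       + g_query <= V (TestState j u c)) ->
  \sum_(m < N) hist_expect p x threshold_test
     (fun h => if threshold_test h is inr o then g_stop o else g_query) m
  <= V (TestState 0%N b 0%N).
Proof.
move=> p01 V_ge0 stop_true stop_false query.
apply: (sum_hist_expect_le_potential (V := fun h => V (test_state_of h))) => // [h|h].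
  by have := walk_bounds h; case: (test_state_of h) => j u c; apply: V_ge0.
under eq_bigr do rewrite test_state_of_rcons.
have := walk_bounds h; rewrite /threshold_test.
case: (test_state_of h) => j u c /= uab.
case: (ltnP c k) => ck; last by rewrite big_bool /= !mul0r !add0r; apply: stop_true.
case: insubP => [i _ <- | jn]; last first.
  by rewrite big_bool /= !mul0r !add0r; apply: stop_false; rewrite // leqNgt.
by have := query (val i) u c uab ck (ltn_ord i); rewrite bitE.
Qed.

End ThresholdTest.

Section QueryBound.
Variables (R : realType) (n k a b : nat) (x : 'I_n -> bool).
Hypotheses (a_gt0 : (0 < a)%N) (b_gt0 : (0 < b)%N).

(* Walk steps still needed at unit drift: [b] per zero not yet passed and [a]
   per one still needed to reach [k]. *)
Definition work (j c : nat) : nat :=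
  b * (zeros x n - zeros x j) + a * minn (ones x n - ones x j) (k - c).

(* The walk drifts towards the correct end at speed [1 - 2p]; the offset of
   [walk] from [b] is the progress already made on the current bit. *)
Definition query_potential (s : test_state) : R :=
  let: TestState j u c := s in
  if (j < n)%N && (c < k)%N then
    (work j c)%:R + (if bit x j then b%:R - u%:R else u%:R - b%:R)
  else 0.

Lemma work_next j c (r : bool) : (j < n)%N -> (c < k)%N ->
  (work j.+1 (c + r) + (if bit x j then r * a else b) <= work j c)%N.
Proof.
move=> jn ck; rewrite /work.
have O1 := onesS x j; have O2 := ones_le x j.+1.
have Z1 : zeros x j.+1 = (zeros x j + ~~ bit x j)%N by rewrite zerosS jn.
have Z2 := zeros_le x j.+1.
by case: (bit x j) O1 Z1; case: r => /=; nia.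
Qed.

Lemma query_potential_reset j c : query_potential (TestState j b c) <= (work j c)%:R.
Proof. by rewrite /=; case: ifP => _; [case: (bit x j); rewrite subrr addr0 | exact: ler0n]. Qed.

Lemma query_potential_ge0 j u c : (0 < u < a + b)%N -> 0 <= query_potential (TestState j u c).
Proof.
move=> uab /=; case: ifP => // /andP[jn ck].
have W1 := work_next true jn ck; have W0 := work_next false jn ck.
case: (bit x j) W1 W0 => /= W1 W0.
  have : (u <= work j c + b)%N by lia.
  by rewrite -(ler_nat R) natrD => ?; lra.
have : (b <= work j c + u)%N by lia.
by rewrite -(ler_nat R) natrD => ?; lra.
Qed.

Lemma query_potential_step j u c r : (j < n)%N -> (c < k)%N -> (0 < u < a + b)%N ->
  query_potential (test_step a b (TestState j u c) r)
  <= query_potential (TestState j u c) + (if r == bit x j then -1 else 1).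
Proof.
move=> jn ck uab; have W := work_next r jn ck.
have a0 := ler0n R a; have b0 := ler0n R b.
rewrite [X in _ <= X + _]/= jn ck /=.
case: r W => /= W; case: ifP => edge.
- apply: le_trans (query_potential_reset _ _) _.
  have : (u.+1 = a + b)%N by lia.
  move/(congr1 (fun m => m%:R : R)); rewrite -natr1 natrD => Eu.
  by rewrite addn1 -(ler_nat R) natrD in W; case: (bit x j) W => /= W; lra.
- by rewrite /= jn ck /= -natr1; case: (bit x j) => /=; lra.
- apply: le_trans (query_potential_reset _ _) _.
  have -> : u = 1%N by lia.
  by rewrite addn0 -(ler_nat R) natrD in W; case: (bit x j) W => /= W; lra.
- have u_gt0 : (0 < u)%N by lia.
  by rewrite /= jn ck /= -subn1 natrB //; case: (bit x j) => /=; lra.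
Qed.

Lemma query_potential_drift (p : R) j u c : 0 <= p <= 1 ->
  (j < n)%N -> (c < k)%N -> (0 < u < a + b)%N ->
  \sum_(r : bool) (if r == bit x j then 1 - p else p)
     * query_potential (test_step a b (TestState j u c) r) + (1 - 2 * p)
  <= query_potential (TestState j u c).
Proof.
move=> /andP[p0 p1] jn ck uab; rewrite big_bool.
have St := query_potential_step true jn ck uab.
have Sf := query_potential_step false jn ck uab.
by case: (bit x j) St Sf => /= St Sf; nra.
Qed.

Lemma threshold_test_queries (p : R) : 0 <= p -> p < 1 / 2 ->
  expected_queries_le p (threshold_test n k a b) x
    ((b * n + a * minn n k)%N%:R / (1 - 2 * p)).
Proof.
move=> p0 p_lt N; rewrite ler_pdivlMr ?subr_gt0; last by lra.
rewrite mulrC mulr_sumr.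
have p01 : 0 <= p <= 1 by apply/andP; split; lra.
under eq_bigr do rewrite prob_more_hist_expect.
apply: le_trans (threshold_test_potential_bound (V := query_potential)
  (g_stop := fun _ => 0) a_gt0 b_gt0 N p01 _ _ _ _) _.
- exact: query_potential_ge0.
- by move=> j u c uab _; apply: query_potential_ge0.
- by move=> j u c uab _ _; apply: query_potential_ge0.
- by move=> j u c uab ck jn; apply: query_potential_drift.
apply: le_trans (query_potential_reset _ _) _; rewrite ler_nat /work !subn0.
have := ones_add_zeros x (leqnn n); rewrite ones0 zeros0 !subn0; nia.
Qed.

End QueryBound.

Lemma sum_response_le (R : realFieldType) (p : R) (b : bool) (F : bool -> R) (P : R) :
  0 <= p <= 1 -> (forall r, F r <= P) ->
  \sum_(r : bool) (if r == b then 1 - p else p) * F r <= P.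
Proof.
move=> /andP[p0 p1] FP; rewrite big_bool; have := FP true; have := FP false.
by case: b => /=; nra.
Qed.

Lemma ler_nat_bool (R : numDomainType) (b1 b2 : bool) :
  (b1 -> b2) -> (b1 : nat)%:R <= (b2 : nat)%:R :> R.
Proof. by case: b1; case: b2 => //= /(_ isT). Qed.

(* Gambler's ruin: with [rho = p / q], [rho ^+ m] is a martingale along a walk
   moving down with probability [p] and up with probability [q]. *)
Lemma gamblers_ruin_step (R : comPzRingType) (p q rho : R) m :
  p + q = 1 -> rho * q = p -> p * rho ^+ m + q * rho ^+ m.+2 = rho ^+ m.+1.
Proof.
move=> pq rq; rewrite !exprS -rq.
have e : q + rho * q = 1 by rewrite rq addrC.
by rewrite -[RHS]mulr1 -e; ring.
Qed.

Section ErrorBound.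
Variables (R : realType) (p : R) (n k a b : nat) (x : 'I_n -> bool).
Local Notation rho := (p / (1 - p)).

(* For [TH k x = false]: [1] once some zero has been declared a one, plus the
   gambler's ruin bounds [rho ^+ (a + b - u)] for the current zero and
   [rho ^+ a] for each later zero to be declared a one. *)
Definition false_alarm_potential (s : test_state) : R :=
  let: TestState j u c := s in
  ((ones x j < c)%N : nat)%:R + ((j < n)%N && ~~ bit x j : nat)%:R * rho ^+ (a + b - u)
  + rho ^+ a * (zeros x n - zeros x j.+1)%N%:R.

(* For [TH k x = true]: [1] once one of the first [k] ones has been declared a
   zero, plus [rho ^+ u] for the current one and [rho ^+ b] for each later one
   among the first [k]. *)
Definition miss_potential (s : test_state) : R :=
  let: TestState j u c := s in
  ((c < minn (ones x j) k)%N : nat)%:R + (bit x j && (ones x j < k)%N : nat)%:R * rho ^+ u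
  + rho ^+ b * (minn (ones x n) k - minn (ones x j.+1) k)%N%:R.

Lemma false_alarm_potential_reset j c : false_alarm_potential (TestState j b c)
  = ((ones x j < c)%N : nat)%:R + rho ^+ a * (zeros x n - zeros x j)%N%:R.
Proof.
rewrite /= addnK -addrA; congr (_ + _).
have Z1 := zerosS x j; have Z2 := zeros_le x j.+1.
have -> : (zeros x n - zeros x j
  = ((j < n)%N && ~~ bit x j) + (zeros x n - zeros x j.+1))%N by lia.
by rewrite natrD mulrDr mulrC.
Qed.

Lemma miss_potential_reset j c : miss_potential (TestState j b c)
  = ((c < minn (ones x j) k)%N : nat)%:R
    + rho ^+ b * (minn (ones x n) k - minn (ones x j) k)%N%:R.
Proof.
rewrite /= -addrA; congr (_ + _).
have O1 := onesS x j; have O2 := ones_le x j.+1.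
have -> : (minn (ones x n) k - minn (ones x j) k
  = (bit x j && (ones x j < k)%N) + (minn (ones x n) k - minn (ones x j.+1) k))%N.
  by move: O1 O2; case: (bit x j) => /=; lia.
by rewrite natrD mulrDr mulrC.
Qed.

Hypothesis p01 : 0 < p < 1.

Lemma rho_ge0 : 0 <= rho.
Proof. by case/andP: p01 => p0 p1; apply: divr_ge0; lra. Qed.

Lemma rho_ruin m : p * rho ^+ m + (1 - p) * rho ^+ m.+2 = rho ^+ m.+1.
Proof.
by case/andP: p01 => p0 p1; apply: gamblers_ruin_step; [ring | rewrite divfK //; lra].
Qed.

Lemma false_alarm_potential_settled j u c r : (j < n)%N -> bit x j ->
  false_alarm_potential (test_step a b (TestState j u c) r)
  <= false_alarm_potential (TestState j u c).
Proof.
move=> jn bj; rewrite [X in _ <= X]/= jn bj mulr0n mul0r addr0.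
case: r => /=; case: ifP => _.
- rewrite false_alarm_potential_reset lerD2r; apply: ler_nat_bool.
  by rewrite onesS bj; lia.
- by rewrite /= jn bj mulr0n mul0r addr0.
- rewrite false_alarm_potential_reset lerD2r; apply: ler_nat_bool.
  by rewrite onesS bj; lia.
- by rewrite /= jn bj mulr0n mul0r addr0.
Qed.

Lemma false_alarm_potential_step j u c : (j < n)%N -> (0 < u < a + b)%N ->
  \sum_(r : bool) (if r == bit x j then 1 - p else p)
     * false_alarm_potential (test_step a b (TestState j u c) r)
  <= false_alarm_potential (TestState j u c).
Proof.
move=> jn uab; have [p0 p1] := andP p01.
case bj: (bit x j).
  by apply: sum_response_le => [|r]; [lra | exact: false_alarm_potential_settled].
have [m em] : exists m, (a + b - u = m.+1)%N by exists (a + b - u).-1; lia.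
rewrite big_bool [X in _ <= X]/= jn bj /= em.
set I := ((ones x j < c)%N : nat)%:R; set C := rho ^+ a * _.
have I0 : 0 <= I := ler0n _ _.
have St : false_alarm_potential (test_step a b (TestState j u c) true) <= I + rho ^+ m + C.
  rewrite /=; case: ifP => edge.
    rewrite false_alarm_potential_reset -/C (_ : m = 0%N) ?expr0; last by lia.
    by rewrite lerD2r; have := lern1 R (ones x j.+1 < c.+1)%N; rewrite leq_b1; lra.
  by rewrite /= jn bj /= mul1r (_ : a + b - u.+1 = m)%N //; lia.
have Sf : false_alarm_potential (test_step a b (TestState j u c) false) <= I + rho ^+ m.+2 + C.
  rewrite /=; case: ifP => edge.
    rewrite false_alarm_potential_reset onesS bj addn0 -/I -/C.
    by have := exprn_ge0 m.+2 rho_ge0; lra.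
  by rewrite /= jn bj /= mul1r (_ : a + b - u.-1 = m.+2)%N //; lia.
rewrite mul1r -rho_ruin; nra.
Qed.

Lemma miss_potential_settled j u c r : (bit x j && (ones x j < k)%N) = false ->
  miss_potential (test_step a b (TestState j u c) r) <= miss_potential (TestState j u c).
Proof.
move=> idle; have O1 := onesS x j.
rewrite [X in _ <= X]/= idle mulr0n mul0r addr0.
case: r => /=; case: ifP => _.
- rewrite miss_potential_reset lerD2r; apply: ler_nat_bool.
  by move: idle O1; case: (bit x j) => /= idle O1; lia.
- by rewrite /= idle mulr0n mul0r addr0.
- rewrite miss_potential_reset lerD2r; apply: ler_nat_bool.
  by move: idle O1; case: (bit x j) => /= idle O1; lia.
- by rewrite /= idle mulr0n mul0r addr0.
Qed.

Lemma miss_potential_step j u c : (0 < u < a + b)%N ->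
  \sum_(r : bool) (if r == bit x j then 1 - p else p)
     * miss_potential (test_step a b (TestState j u c) r)
  <= miss_potential (TestState j u c).
Proof.
move=> uab; have [p0 p1] := andP p01.
case active: (bit x j && (ones x j < k)%N); last first.
  by apply: sum_response_le => [|r]; [lra | exact: miss_potential_settled].
have /andP[bj _] := active.
have [m em] : exists m, u = m.+1 by exists u.-1; lia.
subst u; rewrite big_bool [X in _ <= X]/= active bj /=.
set I := ((c < minn (ones x j) k)%N : nat)%:R; set C := rho ^+ b * _.
have I0 : 0 <= I := ler0n _ _.
have St : miss_potential (test_step a b (TestState j m.+1 c) true) <= I + rho ^+ m.+2 + C.
  rewrite /=; case: ifP => edge; last by rewrite /= active mul1r.
  rewrite miss_potential_reset -/C; have := exprn_ge0 m.+2 rho_ge0.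
  have : ((c.+1 < minn (ones x j.+1) k)%N : nat)%:R <= I :> R.
    by apply: ler_nat_bool; rewrite onesS bj; lia.
  lra.
have Sf : miss_potential (test_step a b (TestState j m.+1 c) false) <= I + rho ^+ m + C.
  rewrite /=; case: ifP => edge; last by rewrite /= active mul1r.
  rewrite miss_potential_reset -/C (_ : m = 0%N) ?expr0; last by lia.
  by rewrite lerD2r; have := lern1 R (c < minn (ones x j.+1) k)%N; rewrite leq_b1; lra.
rewrite mul1r -(rho_ruin m); nra.
Qed.

Definition error_potential (s : test_state) : R :=
  if TH k x then miss_potential s else false_alarm_potential s.

Definition erred (s : test_state) : bool :=
  let: TestState j _ c := s in
  if TH k x then (c < minn (ones x j) k)%N else (ones x j < c)%N.

Lemma erred_le_error_potential s : (erred s : nat)%:R <= error_potential s.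
Proof.
rewrite /error_potential /erred; case: TH; case: s => j u c /=;
  by rewrite -addrA lerDl addr_ge0 ?mulr_ge0 ?exprn_ge0 ?rho_ge0.
Qed.

Lemma error_potential_ge0 s : 0 <= error_potential s.
Proof. exact: le_trans (erred_le_error_potential s). Qed.

End ErrorBound.

Lemma threshold_test_error (R : realType) (p d : R) n k a b (x : 'I_n -> bool) :
  0 < p < 1 -> (0 < a)%N -> (0 < b)%N ->
  n%:R * (p / (1 - p)) ^+ a <= d -> k%:R * (p / (1 - p)) ^+ b <= d ->
  error_le p k (threshold_test n k a b) x d.
Proof.
move=> p01 a_gt0 b_gt0 na_le kb_le N.
have p01' : 0 <= p <= 1 by case/andP: p01 => p0 p1; apply/andP; split; lra.
have erred_le := @erred_le_error_potential R p n k a b x p01.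
apply: le_trans (threshold_test_potential_bound (V := error_potential p k a b x)
  (g_query := 0) (g_stop := fun o => (o != TH k x)%:R) a_gt0 b_gt0 N p01' _ _ _ _) _.
- by move=> *; apply: error_potential_ge0.
- move=> j u c _ kc; apply: le_trans (erred_le _); apply: ler_nat_bool.
  by rewrite /= TH_ones; case: (leqP k (ones x n)) => //= kO _; have := ones_le x j; lia.
- move=> j u c _ ck nj; apply: le_trans (erred_le _); apply: ler_nat_bool.
  by rewrite /= TH_ones ones_out //; case: (leqP k (ones x n)) => //= kO _; lia.
- move=> j u c uab _ jn; rewrite addr0 /error_potential; case: TH.
    exact: miss_potential_step.
  exact: false_alarm_potential_step.
have rho_pow_ge0 m : 0 <= (p / (1 - p)) ^+ m := exprn_ge0 m (rho_ge0 p01).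
rewrite /error_potential; case: TH.
  rewrite miss_potential_reset ones0 min0n add0r subn0 mulrC.
  by apply: le_trans kb_le; rewrite ler_wpM2r ?ler_nat ?geq_minr.
rewrite false_alarm_potential_reset ones0 zeros0 add0r subn0 mulrC.
apply: le_trans na_le; rewrite ler_wpM2r ?ler_nat //.
by have := ones_add_zeros x (leqnn n); lia.
Qed.

Definition log_odds (R : realType) (p : R) : R := ln ((1 - p) / p).

Definition walk_length (R : realType) (p y : R) : nat := (Num.truncn (y / log_odds p)).+1.

Section WalkLength.
Variables (R : realType) (p : R).

Lemma log_odds_gt0 : 0 < p -> p < 1 / 2 -> 0 < log_odds p.
Proof. by move=> p0 p_lt; apply: ln_gt0; rewrite ltr_pdivlMr //; lra. Qed.

Lemma walk_length_gt y : 0 < p -> p < 1 / 2 -> y < (walk_length p y)%:R * log_odds p.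
Proof. by move=> p0 p_lt; rewrite -ltr_pdivrMr ?log_odds_gt0 // truncnS_gt. Qed.

Lemma walk_length_le y : 0 < p -> p < 1 / 2 -> 0 <= y ->
  (walk_length p y)%:R * log_odds p <= y + log_odds p.
Proof.
move=> p0 p_lt y0; have L0 := log_odds_gt0 p0 p_lt.
rewrite -natr1 mulrDl mul1r lerD2r -ler_pdivlMr //.
by rewrite truncn_le divr_ge0 // ltW.
Qed.

Lemma walk_length_ruin (c d : R) : 0 < p -> p < 1 / 2 -> 0 < c -> 0 < d ->
  c * (p / (1 - p)) ^+ walk_length p (ln (c / d)) <= d.
Proof.
move=> p0 p_lt c0 d0; have m_gt := walk_length_gt (ln (c / d)) p0 p_lt.
set m := walk_length p _ in m_gt *.
have q0 : 0 < 1 - p by lra.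
have -> : p / (1 - p) = expR (- log_odds p).
  by rewrite -lnV ?posrE ?divr_gt0 // invf_div lnK // posrE divr_gt0.
rewrite -expRM_natl -[c]lnK ?posrE // -expRD -[d in _ <= d]lnK ?posrE //.
by rewrite ler_expR mulrN; rewrite ln_div ?posrE // in m_gt; lra.
Qed.

End WalkLength.

Section Budget.
Variables (R : realType) (p : R).

Definition query_budget (n k : nat) (d : R) : R :=
  ((walk_length p (ln (k%:R / d)) * n + walk_length p (ln (n%:R / d)) * minn n k)%N%:R
   / (1 - 2 * p)).

Definition query_target (n k : nat) (d : R) : R := n%:R * ln (k%:R / d) / DKL p.

Lemma threshold_test_meets_budget n k (d : R) :
  0 < p -> p < 1 / 2 -> (0 < k)%N -> 0 < d ->
  exists A : strategy n, forall x,
    error_le p k A x d /\ expected_queries_le p A x (query_budget n k d).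
Proof.
move=> p0 p_lt k0 d0.
exists (threshold_test n k (walk_length p (ln (n%:R / d))) (walk_length p (ln (k%:R / d)))).
move=> x; split; last exact: threshold_test_queries (ltW p0) p_lt.
apply: threshold_test_error => //; first by apply/andP; split; lra.
- have [->|n0] := posnP n; first by rewrite mul0r ltW.
  by apply: walk_length_ruin; rewrite ?ltr0n.
- by apply: walk_length_ruin; rewrite ?ltr0n.
Qed.

Lemma ln_ratio_gt0 k (d : R) : (0 < k)%N -> 0 < d < 1 -> 0 < ln (k%:R / d).
Proof.
move=> k0 /andP[d0 d1]; apply: ln_gt0; rewrite ltr_pdivlMr // mul1r.
by apply: lt_le_trans d1 _; rewrite ler1n.
Qed.

Lemma query_target_gt0 n k (d : R) :
  0 < p -> p < 1 / 2 -> (0 < n)%N -> (0 < k)%N -> 0 < d < 1 -> 0 < query_target n k d.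
Proof.
move=> p0 p_lt n0 k0 d01; have L0 := log_odds_gt0 p0 p_lt.
by rewrite /query_target /DKL -/(log_odds p) divr_gt0 ?mulr_gt0 ?ltr0n ?ln_ratio_gt0 //; lra.
Qed.

Lemma query_budget_targetK n k (d : R) :
  0 < p -> p < 1 / 2 -> (0 < k)%N -> 0 < d < 1 ->
  (1 + (query_budget n k d / query_target n k d - 1)) * query_target n k d = query_budget n k d.
Proof.
move=> p0 p_lt k0 d01; rewrite addrC subrK.
have [->|n0] := posnP n; first by rewrite /query_budget muln0 min0n muln0 !mul0r.
by rewrite divfK // gt_eqF // query_target_gt0.
Qed.

End Budget.

Lemma overhead_ratio_bounds (R : realFieldType) (L lam t be al : R) :
  0 < L -> 0 < lam -> 0 < t -> t <= 1 -> lam < be * L -> be * L <= lam + L ->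
  0 <= al * L -> al * L <= lam + t^-1 + L ->
  0 <= (be + al * t) * L / lam - 1 <= (2 * L + 1) / lam + t.
Proof.
move=> L0 lam0 t0 t1 beL_gt beL_le alL_ge0 alL_le.
have -> : (be + al * t) * L / lam - 1 = (be * L - lam + (al * L) * t) / lam by field; lra.
apply/andP; split.
  by apply: divr_ge0; [have := mulr_ge0 alL_ge0 (ltW t0) | ]; lra.
rewrite ler_pdivrMr // mulrDl divfK ?gt_eqF //.
have : (al * L) * t <= (lam + t^-1 + L) * t by apply: ler_wpM2r; lra.
have -> : (lam + t^-1 + L) * t = lam * t + 1 + L * t by field; lra.
have : L * t <= L by rewrite -[X in _ <= X]mulr1; apply: ler_wpM2l; lra.
nra.
Qed.

Lemma query_budget_overhead (R : realType) (p : R) n k (d : R) :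
  0 < p -> p < 1 / 2 -> (0 < k < n)%N -> 0 < d < 1 ->
  0 <= query_budget p n k d / query_target p n k d - 1
    <= (2 * log_odds p + 1) / ln (k%:R / d) + k%:R / n%:R.
Proof.
move=> p0 p_lt /andP[k0 kn] d01; have [d0 d1] := andP d01.
have L0 := log_odds_gt0 p0 p_lt.
have lam0 := ln_ratio_gt0 k0 d01.
have n0 : 0 < n%:R :> R by rewrite ltr0n; lia.
have k0' : 0 < k%:R :> R by rewrite ltr0n.
have t0 : 0 < k%:R / n%:R :> R by rewrite divr_gt0.
have t1 : k%:R / n%:R <= 1 :> R by rewrite ler_pdivrMr // mul1r ler_nat (ltnW kn).
have lnn : ln (n%:R / d) = ln (n%:R / k%:R) + ln (k%:R / d).
  by rewrite -lnM ?posrE ?divr_gt0 //; congr ln; field; rewrite !gt_eqF.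
have ln_nk : ln (n%:R / k%:R) < (k%:R / n%:R)^-1 :> R.
  by rewrite invf_div; apply: ln_sublinear; rewrite divr_gt0.
have lnn0 : 0 <= ln (n%:R / d).
  by apply: ln_ge0; rewrite ler_pdivlMr // mul1r; apply: le_trans (ltW d1) _; rewrite ler1n; lia.
have -> : query_budget p n k d / query_target p n k d
    = ((walk_length p (ln (k%:R / d)))%:R + (walk_length p (ln (n%:R / d)))%:R * (k%:R / n%:R))
      * log_odds p / ln (k%:R / d).
  rewrite /query_budget /query_target /DKL -/(log_odds p) (minn_idPr (ltnW kn)).
  rewrite natrD !natrM; field; rewrite !gt_eqF //; lra.
apply: overhead_ratio_bounds => //.
- exact: walk_length_gt.
- exact/walk_length_le/ltW.
- by rewrite mulr_ge0 // ltW.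
- by have := walk_length_le p0 p_lt lnn0; lra.
Qed.

Lemma ln_ratio_cvgy (R : realType) (k : nat -> nat) (delta : nat -> R) :
  (forall n, (0 < k n)%N) -> (forall n, 0 < delta n) -> delta @ \oo --> (0 : R) ->
  (fun n => ln ((k n)%:R / delta n)) @ \oo --> +oo.
Proof.
move=> k0 d0 d_cvg; apply/cvgryPge => A; near=> n.
have : delta n < expR (- A) by near: n; exact: (cvgr_lt _ d_cvg _ (expR_gt0 _)).
rewrite -ltr_ln ?posrE ?expR_gt0 // expRK ln_div ?posrE ?ltr0n //.
have k1 : 1 <= (k n)%:R :> R by rewrite ler1n.
by have := ln_ge0 k1; lra.
Unshelve. all: by end_near.
Qed.

(* For [delta n >= 1] answering [false] at once is good enough, whence [-1]. *)
Definition query_overhead (R : realType) (p : R) (k : nat -> nat) (delta : nat -> R)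
    (n : nat) : R :=
  if delta n < 1 then query_budget p n (k n) (delta n) / query_target p n (k n) (delta n) - 1
  else -1.

Lemma query_overhead_cvg0 (R : realType) (p : R) (k : nat -> nat) (delta : nat -> R) :
  0 < p -> p < 1 / 2 -> (forall n, (0 < k n)%N) -> (forall n, 0 < delta n) ->
  (fun n => (k n)%:R / n%:R : R) @ \oo --> (0 : R) -> delta @ \oo --> (0 : R) ->
  query_overhead p k delta @ \oo --> (0 : R).
Proof.
move=> p0 p_lt k0 d0 kn_cvg d_cvg.
have inv_ln_cvg : (fun n => (ln ((k n)%:R / delta n))^-1) @ \oo --> (0 : R).
  have ln_cvg := ln_ratio_cvgy k0 d0 d_cvg.
  have ln_pos : \forall n \near \oo, 0 < ln ((k n)%:R / delta n).
    exact: (cvgryPgt _).1 ln_cvg 0.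
  exact: (gtr0_cvgV0 ln_pos).2 ln_cvg.
have bound_cvg : (fun n => (2 * log_odds p + 1) * (ln ((k n)%:R / delta n))^-1
    + (k n)%:R / n%:R) @ \oo --> (0 : R).
  apply: cvg_trans (cvgD (cvgMl_tmp (a := 2 * log_odds p + 1) inv_ln_cvg) kn_cvg) _.
  by rewrite mulr0 addr0.
apply: (squeeze_cvgr _ (cvg_cst 0) bound_cvg); near=> n.
have n0 : (0 < n)%N by near: n; exists 1%N.
have d1 : delta n < 1 by near: n; exact: (cvgr_lt _ d_cvg _ ltr01).
have kn : (k n < n)%N.
  have : (k n)%:R / n%:R < 1 :> R by near: n; exact: (cvgr_lt _ kn_cvg _ ltr01).
  by rewrite ltr_pdivrMr ?ltr0n // mul1r ltr_nat.
by rewrite /query_overhead d1; apply: query_budget_overhead; rewrite ?k0 ?kn ?d0.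
Unshelve. all: by end_near.
Qed.

Lemma answer_false_meets_budget (R : realType) (p d : R) n k (x : 'I_n -> bool) :
  0 <= p <= 1 -> 1 <= d ->
  error_le p k (fun _ => inr false : 'I_n + bool) x d /\
  expected_queries_le p (fun _ => inr false : 'I_n + bool) x 0.
Proof.
move=> p01 d_ge1; split=> N.
  apply: le_trans d_ge1.
  apply: (sum_hist_expect_le_potential (V := fun=> 1)
    (g := fun=> (false != TH k x)%:R)) => // h.
  by rewrite big_bool /= !mul0r !add0r; case: TH.
apply: (sum_hist_expect_le_potential (V := fun=> 0) (g := fun=> 0)) => // h.
by rewrite big_bool /= !mul0r !addr0.
Qed.

Unset Implicit Arguments.

Theorem theorem2 (R : realType) (p : R) (k : nat -> nat) (delta : nat -> R) :
  0 < p -> p < 1 / 2 ->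
  (forall n, (0 < k n)%N) ->
  (forall n, 0 < delta n) ->
  (fun n => (k n)%:R / n%:R : R) @ \oo --> (0 : R) ->
  delta @ \oo --> (0 : R) ->
  exists eps : nat -> R,
    eps @ \oo --> (0 : R) /\
    forall n : nat, exists A : strategy n,
      forall x : 'I_n -> bool,
        error_le p (k n) A x (delta n) /\
        expected_queries_le p A x
          ((1 + eps n) * (n%:R * ln ((k n)%:R / delta n) / DKL p)).
Proof.
move=> p0 p_lt k0 d0 kn_cvg d_cvg.
exists (query_overhead p k delta); split; first exact: query_overhead_cvg0.
move=> n; rewrite /query_overhead -/(query_target p n (k n) (delta n)).
case: ifPn => [d1 | ].
  have d01 : 0 < delta n < 1 by rewrite d0.
  have [A A_spec] := threshold_test_meets_budget n p0 p_lt (k0 n) (d0 n).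
  exists A => x; rewrite query_budget_targetK //; exact: A_spec.
rewrite -leNgt => d_ge1; exists (fun _ => inr false) => x.
by rewrite addrN mul0r; apply: answer_false_meets_budget => //; apply/andP; split; lra.
Qed.
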